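(* For a stationary policy $\pi$ and $h\ge0$ let $$\overline V^\pi_{0:h}(s):=\min_{\{\hat P_t\}_{t=0}^h}\mathbb E\Big[\sum_{t=0}^h\gamma^t\big(r(s_t,a_t)+\gamma D(\hat P_{t;s_t,a_t},P_{s_t,a_t})\big)\,\Big|\,s_0=s\Big],$$ with $a_t\sim\pi(\cdot|s_t)$, $s_{t+1}\sim\hat P_{t;s_t,a_t}$, and set $\overline V^\pi_{0:-1}:=0$. Then for all $h\ge-1$, $\overline V^\pi_{0:h+1}=\mathcal T^\pi\overline V^\pi_{0:h}$, where $[\mathcal T^\pi V](s)=\sum_a\pi(a|s)(r(s,a)-\gamma\sigma(P_{s,a},V))$. Moreover, for every initial state $s$ the minimum is attained by the same kernels $\hat P^\pi_{t|h;s,a}\in\arg\min_{\hat\mu\in\Delta(\mathcal S)}\big(D(\hat\mu,P_{s,a})+\mathbb E_{s'\sim\hat\mu}\overline V^\pi_{0:h-t-1}(s')\big)$, $t=0,\dots,h$.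
   Context: $\mathcal S$, $\mathcal A$ finite; $\Delta(\mathcal X)$ is the probability simplex over $\mathcal X$. $P=\{P_{s,a}\}$, $P_{s,a}\in\Delta(\mathcal S)$, is the nominal kernel, $r:\mathcal S\times\mathcal A\to[0,1]$, $\gamma\in[0,1)$. A stationary policy is a map $\pi:\mathcal S\to\Delta(\mathcal A)$. A function $\sigma:\mathbb R^{\mathcal S}\to\mathbb R$ is a convex risk measure if (i) $V'\le V$ pointwise implies $\sigma(V)\le\sigma(V')$; (ii) $\sigma(V+m)=\sigma(V)-m$ for constants $m$; (iii) $\sigma$ is convex. For each $(s,a)$ a convex risk measure $\sigma(P_{s,a},\cdot)$ is given and $D(\hat\mu,P_{s,a}):=\sup_{V}\big(-\sigma(P_{s,a},V)-\mathbb E_{s'\sim\hat\mu}V(s')\big)$; it is known that then $\sigma(P_{s,a},V)=\sup_{\hat\mu\in\Delta(\mathcal S)}(-\mathbb E_{\hat\mu}V-D(\hat\mu,P_{s,a}))$ and $D(\cdot,P_{s,a})$ is convex and lower semicontinuous. The minimum is over sequences of time-dependent kernels $\hat P_{t;s,a}\in\Delta(\mathcal S)$. *)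

From HB Require Import structures.
From mathcomp Require Import all_boot all_order all_algebra.
From mathcomp Require Import all_classical all_reals.
From mathcomp Require Import ereal.
Set Implicit Arguments. Unset Strict Implicit. Unset Printing Implicit Defensive.
Import Order.TTheory GRing.Theory Num.Theory.
Local Open Scope ring_scope.
Local Open Scope classical_set_scope.

Section RobustMDP.
Variables (R : realType) (S A : finType).

Definition is_dist (T : finType) (mu : T -> R) : Prop :=
  (forall x, 0 <= mu x) /\ \sum_(x : T) mu x = 1.

Definition expect (mu V : S -> R) : R := \sum_(s : S) mu s * V s.

Definition convex_risk_measure (rho : (S -> R) -> R) : Prop :=
  [/\ (forall V V' : S -> R, (forall s, V' s <= V s) -> rho V <= rho V'),
      (forall (V : S -> R) (m : R), rho (fun s => V s + m) = rho V - m) &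
      (forall (V V' : S -> R) (l : R), 0 <= l <= 1 ->
          rho (fun s => l * V s + (1 - l) * V' s) <= l * rho V + (1 - l) * rho V')].

(* sigma p V  stands for  sigma(P_{s,a}, V) with p = P_{s,a} *)
Definition Dpen (sigma : (S -> R) -> (S -> R) -> R) (mu p : S -> R) : \bar R :=
  ereal_sup (range (fun V : S -> R => ((- sigma p V - expect mu V)%R)%:E)).

Definition Tpi (sigma : (S -> R) -> (S -> R) -> R) (P : S -> A -> S -> R)
  (r : S -> A -> R) (gamma : R) (pi : S -> A -> R) (V : S -> R) (s : S) : R :=
  \sum_(a : A) pi s a * (r s a - gamma * sigma (P s a) V).

Definition kernel_seq (Phat : nat -> S -> A -> S -> R) : Prop :=
  forall t s a, is_dist (Phat t s a).

Definition prev_ord (n : nat) (t : 'I_n) : 'I_n :=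
  Ordinal (leq_ltn_trans (leq_pred t) (ltn_ord t)).

(* probability of the trajectory (s_0,a_0,...,s_{n-1},a_{n-1}) given s_0 = s,
   a_t ~ pi(.|s_t), s_{t+1} ~ Phat_{t; s_t, a_t} *)
Definition traj_prob (pi : S -> A -> R) (Phat : nat -> S -> A -> S -> R)
  (s : S) (n : nat) (tau : {ffun 'I_n -> S * A}) : R :=
  \prod_(t < n)
    ((if val t == 0%N then (if (tau t).1 == s then 1 else 0)
      else Phat (val t).-1 (tau (prev_ord t)).1 (tau (prev_ord t)).2 (tau t).1)
     * pi (tau t).1 (tau t).2).

Definition traj_cost (sigma : (S -> R) -> (S -> R) -> R) (P : S -> A -> S -> R)
  (r : S -> A -> R) (gamma : R) (Phat : nat -> S -> A -> S -> R)
  (n : nat) (tau : {ffun 'I_n -> S * A}) : \bar R :=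
  (\sum_(t < n) (gamma ^+ t)%:E *
     ((r (tau t).1 (tau t).2)%:E
      + gamma%:E * Dpen sigma (Phat (val t) (tau t).1 (tau t).2) (P (tau t).1 (tau t).2)))%E.

(* expected cost over horizon t = 0..n-1 (i.e. h = n-1) *)
Definition Jcost (sigma : (S -> R) -> (S -> R) -> R) (P : S -> A -> S -> R)
  (r : S -> A -> R) (gamma : R) (pi : S -> A -> R)
  (Phat : nat -> S -> A -> S -> R) (n : nat) (s : S) : \bar R :=
  (\sum_(tau : {ffun 'I_n -> S * A})
     (traj_prob pi Phat s tau)%:E * traj_cost sigma P r gamma Phat tau)%E.

(* Vbar n = \overline V^pi_{0:n-1};  Vbar 0 = 0 = \overline V^pi_{0:-1} *)
Definition Vbar (sigma : (S -> R) -> (S -> R) -> R) (P : S -> A -> S -> R)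
  (r : S -> A -> R) (gamma : R) (pi : S -> A -> R) (n : nat) (s : S) : \bar R :=
  ereal_inf [set Jcost sigma P r gamma pi Phat n s | Phat in kernel_seq].

Definition is_argmin (sigma : (S -> R) -> (S -> R) -> R) (p : S -> R)
  (W : S -> \bar R) (mu : S -> R) : Prop :=
  is_dist mu /\
  forall mu' : S -> R, is_dist mu' ->
    (Dpen sigma mu p + \sum_(s' : S) (mu s')%:E * W s'
     <= Dpen sigma mu' p + \sum_(s' : S) (mu' s')%:E * W s')%E.

End RobustMDP.

(* The duality sigma(P, V) = sup_mu (- E_mu V - D(mu, P)) gives, for every
   kernel mu, the Fenchel-Young inequality D(mu, P) + E_mu V >= - sigma(P, V), with
   equality at a dual maximizer. A maximizer exists because the simplex is compact
   and the set of mu with D(mu, P) + E_mu V <= c is an intersection of closed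
   half-spaces, so a cluster point of near-maximizers is one. Conditioning the expected
   cost on the first transition writes the horizon-(n+1) cost of a kernel sequence
   as the one-step cost plus the expected horizon-n cost of the shifted sequence.
   Induction on the horizon then shows that T^pi Vbar_n bounds every such cost from
   below (Fenchel-Young) and is attained by kernels picked in the argmins. *)

From HB Require Import structures.
From mathcomp Require Import all_boot all_order all_algebra.
From mathcomp Require Import all_classical all_reals.
From mathcomp Require Import ereal.
From mathcomp Require Import topology normedtype matrix_normedtype.
From mathcomp Require Import lra.
Import Order.TTheory GRing.Theory Num.Theory.
Import numFieldNormedType.Exports.
Set Implicit Arguments. Unset Strict Implicit. Unset Printing Implicit Defensive.
Local Open Scope ring_scope.
Local Open Scope classical_set_scope.

Section ExtendedRealNeqNy.
Variable R : realDomainType.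
Local Open Scope ereal_scope.
Implicit Types x y : \bar R.

Lemma adde_neqNy x y : x != -oo -> y != -oo -> x + y != -oo.
Proof. by case: x => [x||] //; case: y. Qed.

Lemma adde_def_neqNy x y : x != -oo -> y != -oo -> x +? y.
Proof. by case: x => [x||] //; case: y. Qed.

Lemma sume_neqNy (I : Type) (s : seq I) (P : pred I) (F : I -> \bar R) :
  (forall i, F i != -oo) -> \sum_(i <- s | P i) F i != -oo.
Proof. by move=> FNy; elim/big_ind: _ => //; exact: adde_neqNy. Qed.

Lemma mule_neqNy (x : R) y : (0 <= x)%R -> y != -oo -> x%:E * y != -oo.
Proof.
move=> x0 yNy; rewrite mule_eq_ninfty (negbTE yNy) !andbF /=.
by rewrite ltNge lee_fin x0.
Qed.

Lemma sume_distrr_neqNy (I : Type) (s : seq I) (P : pred I) (x : R) (F : I -> \bar R) :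
  (forall i, F i != -oo) ->
  x%:E * (\sum_(i <- s | P i) F i) = \sum_(i <- s | P i) x%:E * F i.
Proof.
by move=> FNy; apply: fin_num_sume_distrr => // i j _ _; exact: adde_def_neqNy.
Qed.

End ExtendedRealNeqNy.

Section Compactness.
Variable R : realType.

Lemma nested_compact_cluster (T : ptopologicalType) (K : set T) (L : nat -> set T) :
  compact K -> L 0%N `<=` K -> (forall k, L k !=set0) ->
  (forall i j, (i <= j)%N -> L j `<=` L i) ->
  exists x0, cluster (filter_from setT L) x0.
Proof.
move=> cK LK Lne Lmono.
have FL : ProperFilter (filter_from setT L).
  apply: filter_from_proper; last by move=> k _; exact: Lne.
  apply: filter_from_filter; first by exists 0%N.
  move=> i j _ _; exists (maxn i j) => // x Lx.
  by split; apply: Lmono Lx; [exact: leq_maxl | exact: leq_maxr].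
have [x0 [_ clx0]] := cK _ FL (ex_intro2 _ _ 0%N I LK).
by exists x0.
Qed.

Lemma cluster_le_of_approx (T : topologicalType) (h : T -> R) (L : nat -> set T)
    (x0 : T) (c : R) :
  continuous h -> (forall k, L k `<=` [set x | h x <= c + k.+1%:R^-1]) ->
  cluster (filter_from setT L) x0 -> h x0 <= c.
Proof.
move=> hc hL clx0; rewrite leNgt; apply/negP => /ltr_add_invr[k hk].
have Nh : nbhs x0 (h @^-1` [set z | c + k.+1%:R^-1 < z]).
  by apply: hc; apply: open_nbhs_nbhs; split => //; exact: open_gt.
have [y [Ly hy]] := clx0 _ _ (ex_intro2 _ _ k I (fun _ h => h)) Nh.
by have := hL k y Ly; rewrite /= leNgt hy.
Qed.

End Compactness.

Section RiskMeasureDuality.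
Variables (R : realType) (S : finType) (sigma : (S -> R) -> (S -> R) -> R).
Implicit Types (p mu w V : S -> R).

Definition dual_representation p := forall V,
  (sigma p V)%:E =
  ereal_sup [set ((- expect mu V)%:E - Dpen sigma mu p)%E | mu in @is_dist R S].

Lemma Dpen_lbound mu p V : ((- sigma p V - expect mu V)%:E <= Dpen sigma mu p)%E.
Proof. by apply: ereal_sup_ubound; exists V. Qed.

Lemma Dpen_neqNy mu p : Dpen sigma mu p != -oo%E.
Proof. by have := Dpen_lbound mu p (fun _ => 0); case: (Dpen sigma mu p). Qed.

Lemma Fenchel_Dpen p w mu :
  ((- sigma p w)%:E <= Dpen sigma mu p + (expect mu w)%:E)%E.
Proof.
rewrite -leeBlDr // -EFinB; apply: le_trans (Dpen_lbound mu p w).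
by rewrite lee_fin.
Qed.

Lemma expectB mu V V' : expect mu (fun s => V s - V' s) = expect mu V - expect mu V'.
Proof. by rewrite /expect -sumrB; apply: eq_bigr => s _; rewrite mulrBr. Qed.

Lemma expect_cst mu c : expect mu (fun _ => c) = (\sum_s mu s) * c.
Proof. by rewrite /expect mulr_suml. Qed.

Lemma expect_Ndelta mu s : expect mu (fun s' => - (s' == s)%:R) = - mu s.
Proof.
rewrite /expect (bigD1 s) //= eqxx big1 ?addr0 ?mulrN1 // => s' /negbTE ->.
by rewrite oppr0 mulr0.
Qed.

Lemma expectE mu w : (\sum_s (mu s)%:E * (w s)%:E)%E = (expect mu w)%:E.
Proof. by rewrite /expect -sumEFin; apply: eq_bigr => s _; rewrite EFinM. Qed.

Local Notation n := #|S|.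

(* Functions on S are identified with row vectors to use the compactness of boxes. *)
Definition fun_of_rV (x : 'rV[R]_n) : S -> R := fun s => x ord0 (enum_rank s).
Definition rV_of_fun mu : 'rV[R]_n := \row_i mu (enum_val i).

Lemma rV_of_funK : cancel rV_of_fun fun_of_rV.
Proof. by move=> mu; apply: funext => s; rewrite /fun_of_rV mxE enum_rankK. Qed.

Lemma expect_rV_continuous V : continuous (fun x => expect (fun_of_rV x) V).
Proof.
move=> x0; apply: (@cvg_big _ _ _ _ _ add_continuous _ (nbhs x0)).
by move=> s _; apply: cvgMr_tmp; exact: coord_continuous.
Qed.

Lemma dual_near_maximizer p w e : dual_representation p -> 0 < e ->
  exists2 mu, is_dist mu &
    forall V, - sigma p V - expect mu V + expect mu w <= - sigma p w + e.
Proof.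
move=> dual_p e0.
have : ((sigma p w - e)%:E < (sigma p w)%:E)%E by rewrite lte_fin; lra.
rewrite [X in (_ < X)%E]dual_p => /ereal_sup_gt[_ [mu dmu <-]].
have := Dpen_neqNy mu p; have := Dpen_lbound mu p.
case: (Dpen sigma mu p) => [d||] // DV _; rewrite -EFinB lte_fin => hd.
by exists mu => // V; have := DV V; rewrite lee_fin; lra.
Qed.

Lemma cluster_expect_le (L : nat -> set 'rV[R]_n) x0 V c :
  (forall k x, L k x -> expect (fun_of_rV x) V <= c) ->
  cluster (filter_from setT L) x0 -> expect (fun_of_rV x0) V <= c.
Proof.
move=> hL; apply: (cluster_le_of_approx (@expect_rV_continuous V)) => k x Lx /=.
by apply: le_trans (hL k x Lx) _; rewrite lerDl invr_ge0.
Qed.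

Lemma cluster_is_dist (L : nat -> set 'rV[R]_n) x0 :
  (forall k x, L k x -> is_dist (fun_of_rV x)) ->
  cluster (filter_from setT L) x0 -> is_dist (fun_of_rV x0).
Proof.
move=> hL clx0; split.
  move=> s; rewrite -oppr_le0 -expect_Ndelta; apply: cluster_expect_le clx0 => k x Lx.
  by rewrite expect_Ndelta oppr_le0; exact: (hL k x Lx).1.
apply/le_anti/andP; split.
  rewrite -[X in X <= _]mulr1 -expect_cst; apply: cluster_expect_le clx0 => k x Lx.
  by rewrite expect_cst (hL k x Lx).2 mulr1.
rewrite -lerN2 -[X in X <= _]mulrN1 -expect_cst; apply: cluster_expect_le clx0 => k x Lx.
by rewrite expect_cst (hL k x Lx).2 mulrN1.
Qed.

Lemma dist_rV_compact :
  exists2 K : set 'rV[R]_n, compact K & forall x, is_dist (fun_of_rV x) -> K x.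
Proof.
exists [set v : 'rV[R]_n | forall i, `[(0:R), 1]%classic (v ord0 i)].
  by apply: (@rV_compact _ _ (fun _ => `[(0:R), 1]%classic)) => _; exact: segment_compact.
move=> x [x0 x1] i; rewrite /= in_itv /=.
have := x0 (enum_val i); rewrite /fun_of_rV enum_valK => ->.
rewrite -x1 /fun_of_rV (bigD1 (enum_val i)) //= enum_valK lerDl sumr_ge0 // => s _.
exact: x0.
Qed.

Lemma dual_sup_attained p w : dual_representation p ->
  exists2 mu, is_dist mu &
    (Dpen sigma mu p + (expect mu w)%:E <= (- sigma p w)%:E)%E.
Proof.
move=> dual_p; set m := - sigma p w.
pose L k := [set x : 'rV[R]_n | is_dist (fun_of_rV x) /\
  forall V, - sigma p V - expect (fun_of_rV x) V + expect (fun_of_rV x) w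
            <= m + k.+1%:R^-1].
have Lne k : L k !=set0.
  have e0 : 0 < k.+1%:R^-1 :> R by rewrite invr_gt0 ltr0Sn.
  have [mu dmu hmu] := dual_near_maximizer w dual_p e0.
  by exists (rV_of_fun mu); rewrite /L /= rV_of_funK.
have Lmono i j : (i <= j)%N -> L j `<=` L i.
  move=> ij x [dx Hx]; split => // V; apply: le_trans (Hx V) _.
  by rewrite lerD2l lef_pV2 ?posrE ?ltr0Sn // ler_nat ltnS.
have [K cK distK] := dist_rV_compact.
have LK : L 0%N `<=` K by move=> x [dx _]; exact: distK.
have [x0 clx0] := nested_compact_cluster cK LK Lne Lmono.
exists (fun_of_rV x0); first by apply: cluster_is_dist clx0 => k x [].
rewrite -leeBrDr // -EFinB; apply: ge_ereal_sup => _ [V _ <-]; rewrite lee_fin.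
have : expect (fun_of_rV x0) (fun s => w s - V s) <= m + sigma p V.
  apply: (cluster_le_of_approx (@expect_rV_continuous _) _ clx0) => k x [_ Hx] /=.
  rewrite expectB; have := Hx V; set e := k.+1%:R^-1; lra.
rewrite expectB; lra.
Qed.

Lemma argmin_exists p (W : S -> \bar R) : dual_representation p ->
  (forall s, W s \is a fin_num) -> exists mu, is_argmin sigma p W mu.
Proof.
move=> dual_p W_fin; pose w s := fine (W s).
have -> : W = fun s => (w s)%:E by apply: funext => s; rewrite /w fineK.
have [mu dmu mu_opt] := dual_sup_attained w dual_p.
exists mu; split => // mu' dmu'; rewrite !expectE.
exact: le_trans mu_opt (Fenchel_Dpen p w mu').
Qed.

Lemma argmin_value p w mu : dual_representation p ->
  is_argmin sigma p (fun s => (w s)%:E) mu ->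
  (Dpen sigma mu p + (expect mu w)%:E)%E = (- sigma p w)%:E.
Proof.
move=> dual_p [_ mu_min]; apply/le_anti; rewrite Fenchel_Dpen andbT.
have [mu' dmu' mu'_opt] := dual_sup_attained w dual_p.
by have := mu_min mu' dmu'; rewrite !expectE => /le_trans; apply.
Qed.

End RiskMeasureDuality.

Section FiniteMixtures.
Variable R : realDomainType.
Local Open Scope ereal_scope.

Lemma big_mixture_affine (I : finType) (q : I -> R) (c : \bar R) (g : I -> \bar R) :
  (forall i, 0 <= q i)%R -> (\sum_i q i = 1)%R -> c != -oo -> (forall i, g i != -oo) ->
  \sum_i (q i)%:E * (c + g i) = c + \sum_i (q i)%:E * g i.
Proof.
move=> q0 q1 cNy gNy.
under eq_bigr do rewrite muleDr ?adde_def_neqNy //.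
rewrite big_split /= -ge0_sume_distrl; last by move=> i _; rewrite lee_fin.
by rewrite sumEFin q1 mul1e.
Qed.

Lemma big_mixture_exchange (I J : finType) (p : J -> R) (q : J -> I -> R)
    (g : I -> \bar R) :
  (forall j, 0 <= p j)%R -> (forall j i, 0 <= q j i)%R -> (forall i, g i != -oo) ->
  \sum_i (\sum_j p j * q j i)%:E * g i = \sum_j (p j)%:E * \sum_i (q j i)%:E * g i.
Proof.
move=> p0 q0 gNy.
transitivity (\sum_i \sum_j (p j)%:E * ((q j i)%:E * g i)).
  apply: eq_bigr => i _; rewrite -sumEFin ge0_sume_distrl; last first.
    by move=> j _; rewrite lee_fin mulr_ge0.
  by apply: eq_bigr => j _; rewrite EFinM muleA.
rewrite exchange_big /=; apply: eq_bigr => j _; rewrite sume_distrr_neqNy // => i.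
exact: mule_neqNy.
Qed.

End FiniteMixtures.

Lemma big_pair_fst (T : Type) (idx : T) (op : Monoid.com_law idx) (I J : finType)
    (G : I * J -> T) (i0 : I) :
  (forall x, x.1 != i0 -> G x = idx) ->
  \big[op/idx]_(x : I * J) G x = \big[op/idx]_(j : J) G (i0, j).
Proof.
move=> G_off; rewrite (eq_bigr (fun x => G (x.1, x.2))); last by case.
rewrite -(pair_bigA _ (fun i j => G (i, j))) (bigD1 i0) //=.
rewrite [X in op _ X]big1 ?Monoid.mulm1 // => i i_i0.
by apply: big1 => j _; exact: G_off.
Qed.

Section Trajectories.
Variables (R : realType) (S A : finType).
Variables (P : S -> A -> S -> R) (r : S -> A -> R) (gamma : R)
  (sigma : (S -> R) -> (S -> R) -> R) (pi : S -> A -> R).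
Hypothesis pi_dist : forall s, is_dist (pi s).
Hypothesis gamma_ge0 : 0 <= gamma.
Implicit Types (Phat : nat -> S -> A -> S -> R) (s : S) (x : S * A).

Local Notation traj n := {ffun 'I_n -> S * A}.
Local Notation J := (Jcost sigma P r gamma pi).
Local Notation cost := (traj_cost sigma P r gamma).

Definition shift_kernels Phat : nat -> S -> A -> S -> R := fun t => Phat t.+1.

Lemma kernel_seq_shift Phat : kernel_seq Phat -> kernel_seq (shift_kernels Phat).
Proof. by move=> HK t; apply: HK. Qed.

Definition traj_cons n x (f : traj n) : traj n.+1 :=
  [ffun i => if unlift ord0 i is Some j then f j else x].

Lemma traj_cons0 n x (f : traj n) : traj_cons x f ord0 = x.
Proof. by rewrite ffunE unlift_none. Qed.

Lemma traj_consS n x (f : traj n) (k : 'I_n.+1) (j : 'I_n) :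
  val k = (val j).+1 -> traj_cons x f k = f j.
Proof.
move=> kj; have -> : k = lift ord0 j by apply: val_inj; rewrite /= kj.
by rewrite ffunE liftK.
Qed.

Lemma big_traj_cons (T : Type) (idx : T) (op : Monoid.com_law idx) n
    (F : traj n.+1 -> T) :
  \big[op/idx]_(tau : traj n.+1) F tau =
  \big[op/idx]_(x : S * A) \big[op/idx]_(f : traj n) F (traj_cons x f).
Proof.
rewrite pair_big /= (reindex (fun xf : (S * A) * traj n => traj_cons xf.1 xf.2)) //.
exists (fun tau : traj n.+1 => (tau ord0, [ffun j => tau (lift ord0 j)])).
  move=> [x f] _ /=; rewrite traj_cons0; congr pair.
  by apply/ffunP => j; rewrite !ffunE liftK.
by move=> tau _; apply/ffunP => i; rewrite ffunE; case: unliftP => [j ->|->]; rewrite ?ffunE.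
Qed.

Definition traj_factor Phat s n (tau : traj n) (t : 'I_n) : R :=
  (if val t == 0%N then (if (tau t).1 == s then 1 else 0)
   else Phat (val t).-1 (tau (prev_ord t)).1 (tau (prev_ord t)).2 (tau t).1)
  * pi (tau t).1 (tau t).2.

Lemma traj_probE Phat s n (tau : traj n) :
  traj_prob pi Phat s tau = \prod_(t < n) traj_factor Phat s tau t.
Proof. by []. Qed.

Lemma traj_factor0 Phat s n (tau : traj n.+1) :
  traj_factor Phat s tau ord0 =
  (if (tau ord0).1 == s then 1 else 0) * pi (tau ord0).1 (tau ord0).2.
Proof. by []. Qed.

Lemma traj_factor_cons1 Phat s n x (f : traj n.+1) :
  traj_factor Phat s (traj_cons x f) (lift ord0 ord0) =
  Phat 0%N x.1 x.2 (f ord0).1 * pi (f ord0).1 (f ord0).2.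
Proof.
rewrite /traj_factor (@traj_consS _ x f (lift ord0 ord0) ord0) //.
by rewrite (_ : prev_ord _ = ord0) ?traj_cons0 //; exact: val_inj.
Qed.

Lemma traj_factor_consSS Phat s n x (f : traj n.+1) (i : 'I_n) :
  traj_factor Phat s (traj_cons x f) (lift ord0 (lift ord0 i)) =
  traj_factor (shift_kernels Phat) s f (lift ord0 i).
Proof.
rewrite /traj_factor (@traj_consS _ x f _ (lift ord0 i)) //.
by rewrite (@traj_consS _ x f (prev_ord _) (prev_ord (lift ord0 i))).
Qed.

Definition first_step_weight Phat s a n (f : traj n) : R :=
  \sum_s' Phat 0%N s a s' * traj_prob pi (shift_kernels Phat) s' f.

Lemma traj_prob_cons Phat s n x (f : traj n) : is_dist (Phat 0%N x.1 x.2) ->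
  traj_prob pi Phat s (traj_cons x f) =
  (if x.1 == s then 1 else 0) * pi x.1 x.2 * first_step_weight Phat x.1 x.2 f.
Proof.
move=> [_ Phat1]; rewrite /first_step_weight traj_probE big_ord_recl traj_factor0 traj_cons0.
congr (_ * _); case: n f => [|n] f.
  rewrite big_ord0 -[LHS]Phat1; apply: eq_bigr => s' _.
  by rewrite traj_probE big_ord0 mulr1.
rewrite big_ord_recl.
under eq_bigr do rewrite traj_factor_consSS.
rewrite (bigD1 (f ord0).1) //= [X in _ + X]big1 ?addr0; last first.
  move=> s' s'f; rewrite traj_probE big_ord_recl traj_factor0 eq_sym (negbTE s'f).
  by rewrite !mul0r mulr0.
by rewrite traj_probE big_ord_recl traj_factor0 eqxx mul1r traj_factor_cons1 -!mulrA.
Qed.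

Lemma traj_prob_ge0 Phat s n (tau : traj n) :
  kernel_seq Phat -> 0 <= traj_prob pi Phat s tau.
Proof.
move=> HK; rewrite traj_probE; apply: prodr_ge0 => t _; rewrite /traj_factor.
apply: mulr_ge0; last exact: (pi_dist _).1.
case: ifP => _; first by case: ifP.
exact: (HK _ _ _).1.
Qed.

Lemma traj_prob_sum1 n Phat s : kernel_seq Phat ->
  \sum_(tau : traj n) traj_prob pi Phat s tau = 1.
Proof.
elim: n Phat s => [|n IH] Phat s HK.
  under eq_bigr do rewrite traj_probE big_ord0.
  by rewrite sumr_const card_ffun card_ord expn0.
rewrite big_traj_cons (@big_pair_fst _ _ _ _ _ _ s); last first.
  by move=> x xs; apply: big1 => f _; rewrite traj_prob_cons ?(negbTE xs) ?mul0r.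
rewrite -(pi_dist s).2; apply: eq_bigr => a _.
under eq_bigr do rewrite traj_prob_cons //= eqxx mul1r.
rewrite -mulr_sumr /first_step_weight exchange_big /= -[RHS]mulr1 -(HK 0%N s a).2.
congr (_ * _).
by apply: eq_bigr => s' _; rewrite -mulr_sumr IH ?mulr1 //; exact: kernel_seq_shift.
Qed.

Lemma first_step_weight_ge0 Phat s a n (f : traj n) :
  kernel_seq Phat -> 0 <= first_step_weight Phat s a f.
Proof.
move=> HK; apply: sumr_ge0 => s' _.
apply: mulr_ge0; first exact: (HK _ _ _).1.
exact: traj_prob_ge0 (kernel_seq_shift HK).
Qed.

Lemma first_step_weight_sum1 Phat s a n :
  kernel_seq Phat -> \sum_(f : traj n) first_step_weight Phat s a f = 1.
Proof.
move=> HK; rewrite /first_step_weight exchange_big /= -(HK 0%N s a).2.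
apply: eq_bigr => s' _; rewrite -mulr_sumr traj_prob_sum1 ?mulr1 //.
exact: kernel_seq_shift.
Qed.

Lemma traj_cost_neqNy Phat n (tau : traj n) : cost Phat tau != -oo%E.
Proof.
apply: sume_neqNy => t; apply: mule_neqNy; first exact: exprn_ge0.
by apply: adde_neqNy => //; apply: mule_neqNy => //; exact: Dpen_neqNy.
Qed.

Lemma traj_cost_cons Phat n x (f : traj n) :
  cost Phat (traj_cons x f) =
  ((r x.1 x.2)%:E + gamma%:E * Dpen sigma (Phat 0%N x.1 x.2) (P x.1 x.2)
   + gamma%:E * cost (shift_kernels Phat) f)%E.
Proof.
rewrite /traj_cost big_ord_recl traj_cons0 expr0 mul1e; congr (_ + _)%E.
rewrite sume_distrr_neqNy; last first.
  move=> t; apply: mule_neqNy; first exact: exprn_ge0.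
  by apply: adde_neqNy => //; apply: mule_neqNy => //; exact: Dpen_neqNy.
apply: eq_bigr => i _; rewrite (@traj_consS _ x f (lift ord0 i) i) //.
by rewrite exprS EFinM muleA.
Qed.

Lemma Jcost_neqNy Phat n s : kernel_seq Phat -> J Phat n s != -oo%E.
Proof.
move=> HK; apply: sume_neqNy => tau; apply: mule_neqNy; first exact: traj_prob_ge0.
exact: traj_cost_neqNy.
Qed.

Lemma Jcost0 Phat s : J Phat 0 s = 0%E.
Proof. by apply: big1 => tau _; rewrite /traj_cost big_ord0 mule0. Qed.

Lemma Jcost_rec Phat n s : kernel_seq Phat ->
  J Phat n.+1 s =
  (\sum_a (pi s a)%:E * ((r s a)%:E + gamma%:E *
      (Dpen sigma (Phat 0%N s a) (P s a) +
       \sum_s' (Phat 0%N s a s')%:E * J (shift_kernels Phat) n s')))%E.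
Proof.
move=> HK; have HK' := kernel_seq_shift HK.
rewrite {1}/Jcost big_traj_cons (@big_pair_fst _ _ _ _ _ _ s); last first.
  move=> x xs; apply: big1 => f _.
  by rewrite traj_prob_cons ?(negbTE xs) ?mul0r ?mul0e.
apply: eq_bigr => a _.
have q0 := @first_step_weight_ge0 Phat s a n ^~ HK.
have q1 := first_step_weight_sum1 s a n HK.
set c := ((r s a)%:E + gamma%:E * Dpen sigma (Phat 0%N s a) (P s a))%E.
have cNy : c != -oo%E.
  by apply: adde_neqNy => //; apply: mule_neqNy => //; exact: Dpen_neqNy.
have costNy (f : traj n) : (gamma%:E * cost (shift_kernels Phat) f != -oo)%E.
  by apply: mule_neqNy => //; exact: traj_cost_neqNy.
under eq_bigr => f _ do
  rewrite traj_prob_cons ?(HK 0%N s a) //= traj_cost_cons eqxx mul1r EFinM -muleA.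
rewrite -sume_distrr_neqNy; last first.
  by move=> f; apply: mule_neqNy; [exact: q0 | exact: adde_neqNy].
rewrite (big_mixture_affine q0 q1 cNy costNy).
rewrite [X in _ = (_ * (_ + X))%E]muleDr // ?addeA; last first.
  apply: adde_def_neqNy; first exact: Dpen_neqNy.
  apply: sume_neqNy => s'; apply: mule_neqNy; first exact: (HK _ _ _).1.
  exact: Jcost_neqNy.
congr (_ * (_ + _))%E.
rewrite (eq_bigr (fun f =>
  gamma%:E * ((first_step_weight Phat s a f)%:E * cost (shift_kernels Phat) f)))%E;
  last by move=> f _; rewrite muleCA.
rewrite -sume_distrr_neqNy; last first.
  by move=> f; apply: mule_neqNy; [exact: q0 | exact: traj_cost_neqNy].
congr (_ * _)%E; apply: big_mixture_exchange.
- by move=> s'; exact: (HK _ _ _).1.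
- by move=> s' f; exact: traj_prob_ge0.
- exact: traj_cost_neqNy.
Qed.

End Trajectories.

Section DynamicProgramming.
Variables (R : realType) (S A : finType)
  (P : S -> A -> S -> R) (r : S -> A -> R) (gamma : R)
  (sigma : (S -> R) -> (S -> R) -> R) (pi : S -> A -> R).
Hypothesis P_dist : forall s a, is_dist (P s a).
Hypothesis dual_P : forall s a, dual_representation sigma (P s a).
Hypothesis pi_dist : forall s, is_dist (pi s).
Hypothesis gamma_ge0 : 0 <= gamma.
Implicit Types (Phat : nat -> S -> A -> S -> R) (s : S) (w : S -> R).

Local Notation V := (Vbar sigma P r gamma pi).
Local Notation J := (Jcost sigma P r gamma pi).
Local Notation T := (Tpi sigma P r gamma pi).

Definition argmin_kernels n Phat := forall t s a, (t < n)%N ->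
  is_argmin sigma (P s a) (V (n.-1 - t)) (Phat t s a).

Lemma Vbar_le_Jcost Phat n s : kernel_seq Phat -> (V n s <= J Phat n s)%E.
Proof. by move=> HK; apply: ereal_inf_lbound; exists Phat. Qed.

Lemma Vbar_eq_Jcost Phat n s : kernel_seq Phat ->
  (forall Psi, kernel_seq Psi -> (J Phat n s <= J Psi n s)%E) -> V n s = J Phat n s.
Proof.
move=> HK Phat_min; apply/le_anti; rewrite Vbar_le_Jcost //=.
by apply/ereal_infP => _ [Psi HPsi <-]; exact: Phat_min.
Qed.

Lemma EFin_Tpi w s : (T w s)%:E =
  (\sum_a (pi s a)%:E * ((r s a)%:E + gamma%:E * (- sigma (P s a) w)%:E))%E.
Proof.
by rewrite /Tpi -sumEFin; apply: eq_bigr => a _; rewrite -mulrN EFinM EFinD EFinM.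
Qed.

Lemma Tpi_le_Jcost Phat n s w : kernel_seq Phat ->
  (forall s', ((w s')%:E <= J (shift_kernels Phat) n s')%E) ->
  ((T w s)%:E <= J Phat n.+1 s)%E.
Proof.
move=> HK w_le; rewrite Jcost_rec // EFin_Tpi; apply: lee_sum => a _.
apply: lee_wpmul2l; first by rewrite lee_fin; exact: (pi_dist s).1.
apply: leeD2l; apply: lee_wpmul2l; first by rewrite lee_fin.
apply: le_trans (Fenchel_Dpen sigma (P s a) w (Phat 0%N s a)) _.
apply: leeD2l; rewrite -expectE; apply: lee_sum => s' _.
by apply: lee_wpmul2l => //; rewrite lee_fin; exact: (HK _ _ _).1.
Qed.

Lemma Jcost_eq_Tpi Phat n s w : kernel_seq Phat ->
  (forall s', J (shift_kernels Phat) n s' = (w s')%:E) ->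
  (forall a, is_argmin sigma (P s a) (fun s' => (w s')%:E) (Phat 0%N s a)) ->
  J Phat n.+1 s = (T w s)%:E.
Proof.
move=> HK Jw Phat_argmin; rewrite Jcost_rec // EFin_Tpi; apply: eq_bigr => a _.
under eq_bigr do rewrite Jw.
by rewrite expectE (argmin_value (dual_P s a) (Phat_argmin a)).
Qed.

Lemma argmin_kernels_shift n Phat :
  argmin_kernels n.+1 Phat -> argmin_kernels n (shift_kernels Phat).
Proof.
move=> Phat_argmin t s a tn; have := Phat_argmin t.+1 s a tn.
by rewrite (_ : (n.+1.-1 - t.+1 = n.-1 - t)%N) //; case: (n) tn.
Qed.

Lemma argmin_kernels_exist n : (forall k, (k <= n)%N -> forall s, V k s \is a fin_num) ->
  exists2 Phat, kernel_seq Phat & argmin_kernels n.+1 Phat.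
Proof.
move=> V_fin.
have argmin_or_any (x : nat * S * A) : exists mu, is_dist mu /\
    ((x.1.1 < n.+1)%N -> is_argmin sigma (P x.1.2 x.2) (V (n - x.1.1)) mu).
  case: x => -[t s] a /=; have [tn|] := ltnP t n.+1; last first.
    by exists (P s a); split => //; rewrite ltnNge => /negP.
  have [mu [dmu mu_min]] := argmin_exists (dual_P s a) (V_fin (n - t)%N (leq_subr t n)).
  by exists mu.
have [f f_spec] := choice argmin_or_any.
by exists (fun t s a => f (t, s, a)) => [t s a|t s a]; have [] := f_spec (t, s, a).
Qed.

Definition horizon_solved n :=
  (forall k, (k <= n)%N -> forall s, V k s \is a fin_num) /\
  (forall Phat, kernel_seq Phat -> argmin_kernels n Phat -> forall s, J Phat n s = V n s).

Lemma horizon_solved0 : horizon_solved 0.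
Proof.
have P_kernel : kernel_seq (fun _ => P) by move=> t; exact: P_dist.
have V0 s : V 0 s = 0%E.
  by rewrite (Vbar_eq_Jcost (s := s) P_kernel) ?Jcost0 // => Psi _; rewrite !Jcost0.
split=> [k|Phat _ _ s]; last by rewrite V0 Jcost0.
by rewrite leqn0 => /eqP-> s; rewrite V0.
Qed.

Lemma horizon_solved_Bellman n : horizon_solved n ->
  (forall s, V n.+1 s = (T (fun s' => fine (V n s')) s)%:E) /\ horizon_solved n.+1.
Proof.
move=> [V_fin V_attained]; set w := fun s' => fine (V n s').
have Vw s' : V n s' = (w s')%:E by rewrite /w fineK // V_fin.
have J_argmin Phat : kernel_seq Phat -> argmin_kernels n.+1 Phat ->
    forall s, J Phat n.+1 s = (T w s)%:E.
  move=> HK Phat_argmin s; apply: Jcost_eq_Tpi => //.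
    move=> s'; rewrite V_attained; first by rewrite Vw.
      exact: kernel_seq_shift.
    exact: argmin_kernels_shift.
  by move=> a; have := Phat_argmin 0%N s a (ltn0Sn n); rewrite /= subn0 (funext Vw).
have [Phat HK Phat_argmin] := argmin_kernels_exist V_fin.
have V_Bellman s : V n.+1 s = (T w s)%:E.
  rewrite (Vbar_eq_Jcost (s := s) HK) ?J_argmin // => Psi HPsi.
  apply: Tpi_le_Jcost => // s'.
  by rewrite -Vw; apply: Vbar_le_Jcost; exact: kernel_seq_shift.
split=> //; split=> [k|Psi HPsi Psi_argmin s]; last by rewrite J_argmin.
by rewrite leq_eqVlt ltnS => /predU1P[-> s|/V_fin //]; rewrite V_Bellman.
Qed.

Lemma horizon_solved_all n : horizon_solved n.
Proof.
by elim: n => [|n IH]; [exact: horizon_solved0 | exact: (horizon_solved_Bellman IH).2].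
Qed.

End DynamicProgramming.

Unset Implicit Arguments.

Theorem mainTheorem4 (R : realType) (S A : finType)
  (P : S -> A -> S -> R) (r : S -> A -> R) (gamma : R)
  (sigma : (S -> R) -> (S -> R) -> R) (pi : S -> A -> R) :
  (forall s a, is_dist (P s a)) ->
  (forall s a, 0 <= r s a <= 1) ->
  0 <= gamma < 1 ->
  (forall s a, convex_risk_measure (sigma (P s a))) ->
  (forall s a (V : S -> R),
     (sigma (P s a) V)%:E =
     ereal_sup [set ((- expect mu V)%:E - Dpen sigma mu (P s a))%E | mu in @is_dist R S]) ->
  (forall s, is_dist (pi s)) ->
  [/\ (forall n s, Vbar sigma P r gamma pi n s \is a fin_num),
      (forall n s, Vbar sigma P r gamma pi n.+1 s =
         (Tpi sigma P r gamma pi (fun s' => fine (Vbar sigma P r gamma pi n s')) s)%:E),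
      (forall n t s a, (t < n)%N -> exists mu : S -> R,
         is_argmin sigma (P s a) (Vbar sigma P r gamma pi (n.-1 - t)) mu) &
      (forall n (Phat : nat -> S -> A -> S -> R),
         kernel_seq Phat ->
         (forall t s a, (t < n)%N ->
            is_argmin sigma (P s a) (Vbar sigma P r gamma pi (n.-1 - t)) (Phat t s a)) ->
         forall s, Jcost sigma P r gamma pi Phat n s = Vbar sigma P r gamma pi n s)].
Proof.
move=> P_dist _ /andP[gamma_ge0 _] _ dual_P pi_dist.
have solved n := horizon_solved_all r P_dist dual_P pi_dist gamma_ge0 n.
split.
- by move=> n; exact: (solved n).1 n (leqnn n).
- by move=> n; exact: (horizon_solved_Bellman P_dist dual_P pi_dist gamma_ge0 (solved n)).1.
- move=> n t s a _; apply: argmin_exists (dual_P s a) _.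
  exact: (solved n.-1).1 _ (leq_subr t n.-1).
- by move=> n Phat HK Phat_argmin; exact: (solved n).2 Phat HK Phat_argmin.
Qed.
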